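(* Let $n\ge 2$, let $X$ be a real $n\times n$ matrix with $\|X\|=1$, and define the linear map $T:\mathfrak{gl}(n,\mathbb R)\to\mathfrak{gl}(n,\mathbb R)$ by $T(Y)=[X^T,[X,Y]]$. Let $\alpha$ be the maximum eigenvalue of $T$. Then the multiplicity of the eigenvalue $\alpha$ is at least $2$.
   Context: $\mathfrak{gl}(n,\mathbb R)$ is the space of real $n\times n$ matrices with the Frobenius inner product $\langle Y_1,Y_2\rangle=\sum_{i,j}(Y_1)_{ij}(Y_2)_{ij}$, with respect to which $T$ is symmetric (so its eigenvalues are real). $[A,B]=AB-BA$, $X^T$ is the transpose, and $\|X\|^2=\sum_{i,j}x_{ij}^2$. *)

From HB Require Import structures.
From mathcomp Require Import all_boot all_order all_algebra.
From mathcomp Require Import all_reals.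
Set Implicit Arguments. Unset Strict Implicit. Unset Printing Implicit Defensive.
Import Order.TTheory GRing.Theory Num.Theory.
Local Open Scope ring_scope.

Definition lie_bracket (R : comRingType) (n : nat) (A B : 'M[R]_n) : 'M[R]_n :=
  A *m B - B *m A.

Definition frob_norm2 (R : comRingType) (n : nat) (X : 'M[R]_n) : R :=
  \sum_(i < n) \sum_(j < n) X i j ^+ 2.

Definition opT (R : comRingType) (n : nat) (X : 'M[R]_n) (Y : 'M[R]_n) : 'M[R]_n :=
  lie_bracket X^T (lie_bracket X Y).

(* Matrix of T acting on mxvec-coordinates of gl(n,R) (row-vector convention:
   mxvec Y *m opT_mx X = mxvec (opT X Y)). *)
Definition opT_mx (R : comRingType) (n : nat) (X : 'M[R]_n) : 'M[R]_(n * n) :=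
  lin_mx (opT X).

From HB Require Import structures.
From mathcomp Require Import all_boot all_order all_algebra.
From mathcomp Require Import all_reals.
Set Implicit Arguments. Unset Strict Implicit. Unset Printing Implicit Defensive.
Import Order.TTheory GRing.Theory Num.Theory.
Local Open Scope ring_scope.

(* Every eigenvalue a of T has multiplicity at least 2.  For a <> 0,
   Y |-> [X,Y]^T maps the a-eigenspace to itself and sends an eigenvector Y
   to a nonzero matrix that is Frobenius-orthogonal to Y, since
   tr([X,Y]^T Y^T) = tr(Y [X,Y]) = 0; the two are therefore independent.
   For a = 0 the eigenspace contains the centraliser of X, which contains 1
   and X, and is everything when X is scalar. *)

Lemma lie_bracket_linear (R : comNzRingType) n (A : 'M[R]_n) :
  linear (lie_bracket A).
Proof.
move=> a Y Z; rewrite /lie_bracket mulmxDr mulmxDl -scalemxAr -scalemxAl.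
by rewrite scalerBr opprD addrACA.
Qed.

HB.instance Definition _ (R : comNzRingType) n (A : 'M[R]_n) :=
  GRing.isLinear.Build R 'M[R]_n 'M[R]_n *:%R (lie_bracket A) (lie_bracket_linear A).

Lemma opT_linear (R : comNzRingType) n (X : 'M[R]_n) : linear (opT X).
Proof. by move=> a Y Z; rewrite /opT !linearP. Qed.

HB.instance Definition _ (R : comNzRingType) n (X : 'M[R]_n) :=
  GRing.isLinear.Build R 'M[R]_n 'M[R]_n *:%R (opT X) (opT_linear X).

Lemma mul_mxvec_opT_mx (R : comNzRingType) n (X Y : 'M[R]_n) :
  mxvec Y *m opT_mx X = mxvec (opT X Y).
Proof. exact: mul_vec_lin. Qed.

Lemma eigenspace_opT_mxvec (R : fieldType) n (X Y : 'M[R]_n) a :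
  (mxvec Y <= eigenspace (opT_mx X) a)%MS = (opT X Y == a *: Y).
Proof.
apply/eigenspaceP/eqP; rewrite mul_mxvec_opT_mx.
  by rewrite -linearZ => /(can_inj mxvecK).
by move=> ->; rewrite linearZ.
Qed.

Lemma mxrank_ge2 (F : fieldType) m N (E : 'M[F]_(m, N)) (v w : 'rV[F]_N) :
  (v <= E)%MS -> (w <= E)%MS -> v != 0 -> (forall c, w != c *: v) ->
  (2 <= \rank E)%N.
Proof.
move=> vE wE v0 w_indep; rewrite ltnNge; apply/negP => rE1.
have Ev : (E <= v)%MS.
  have [_ <-] := mxrank_leqif_sup vE.
  by rewrite eqn_leq mxrankS //= rank_rV v0.
have /sub_rVP[c wc] := submx_trans wE Ev.
by move/eqP: wc; rewrite (negbTE (w_indep c)).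
Qed.

Lemma opT_eigenspace_rank_ge2 (R : fieldType) n (X Y Z : 'M[R]_n) a :
  opT X Y = a *: Y -> opT X Z = a *: Z -> Y != 0 -> (forall c, Z != c *: Y) ->
  (2 <= \rank (eigenspace (opT_mx X) a))%N.
Proof.
move=> /eqP YE /eqP ZE Y0 Z_indep.
apply: (@mxrank_ge2 _ _ _ _ (mxvec Y) (mxvec Z)).
- by rewrite eigenspace_opT_mxvec.
- by rewrite eigenspace_opT_mxvec.
- by rewrite mxvec_eq0.
- by move=> c; rewrite -linearZ (can_eq mxvecK).
Qed.

Lemma mxtrace_mul_trmx_eq0 (R : realDomainType) n (A : 'M[R]_n) :
  \tr (A *m A^T) = 0 -> A = 0.
Proof.
have -> : \tr (A *m A^T) = \sum_i \sum_j A i j ^+ 2.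
  apply: eq_bigr => i _; rewrite mxE; apply: eq_bigr => j _.
  by rewrite mxE expr2.
move=> /(psumr_eq0P (fun i _ => sumr_ge0 _ (fun j _ => sqr_ge0 (A i j)))) A0.
apply/matrixP => i j; rewrite mxE; apply/eqP; rewrite -sqrf_eq0.
by rewrite (psumr_eq0P (fun j _ => sqr_ge0 (A i j)) (A0 i isT)).
Qed.

Lemma lie_bracketC (R : comNzRingType) n (A B : 'M[R]_n) :
  lie_bracket B A = - lie_bracket A B.
Proof. by rewrite /lie_bracket opprB. Qed.

Lemma trmx_lie_bracket (R : comNzRingType) n (A B : 'M[R]_n) :
  (lie_bracket A B)^T = lie_bracket B^T A^T.
Proof. by rewrite /lie_bracket linearB /= !trmx_mul. Qed.

Lemma opT_trmx_lie_bracket (R : comNzRingType) n (X Y : 'M[R]_n) a :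
  opT X Y = a *: Y -> opT X (lie_bracket X Y)^T = a *: (lie_bracket X Y)^T.
Proof.
move=> YE.
have XW : lie_bracket X (lie_bracket X Y)^T = - (opT X Y)^T.
  by rewrite -{1}(trmxK X) -trmx_lie_bracket lie_bracketC linearN.
rewrite /opT XW YE !raddfN /= !linearZ /= -trmx_lie_bracket lie_bracketC.
by rewrite [(- _)^T]raddfN opprK.
Qed.

Lemma mxtrace_trmx_lie_bracket (R : comNzRingType) n (X Y : 'M[R]_n) :
  \tr ((lie_bracket X Y)^T *m Y^T) = 0.
Proof.
rewrite -trmx_mul mxtrace_tr /lie_bracket mulmxBr raddfB /=.
by rewrite (mxtrace_mulC Y (Y *m X)) mulmxA subrr.
Qed.

Lemma opT_lie_bracket0 (R : comNzRingType) n (X Z : 'M[R]_n) :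
  lie_bracket X Z = 0 -> opT X Z = 0 *: Z.
Proof. by move=> XZ0; rewrite /opT XZ0 linear0 scale0r. Qed.

Lemma opT_eigenspace_rank_ge2_neq0 (R : realFieldType) n (X : 'M[R]_n) a :
  a != 0 -> eigenvalue (opT_mx X) a ->
  (2 <= \rank (eigenspace (opT_mx X) a))%N.
Proof.
move=> a0 /eigenvalueP[v vE v0]; set Y := vec_mx v.
have Y0 : Y != 0.
  by apply: contra v0 => /eqP/(congr1 mxvec); rewrite vec_mxK linear0 => ->.
have YE : opT X Y = a *: Y.
  by apply/eqP; rewrite -eigenspace_opT_mxvec vec_mxK; apply/eigenspaceP.
apply: (opT_eigenspace_rank_ge2 YE (opT_trmx_lie_bracket YE) Y0) => c.
apply/eqP => XYc; move: (mxtrace_trmx_lie_bracket X Y).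
rewrite XYc -scalemxAl mxtraceZ => /eqP; rewrite mulf_eq0 => /orP[/eqP c0|].
- have XY0 : lie_bracket X Y = 0 by rewrite -[LHS]trmxK XYc c0 scale0r trmx0.
  move/eqP: YE; rewrite opT_lie_bracket0 // scale0r eq_sym scaler_eq0.
  by rewrite (negbTE a0) (negbTE Y0).
- by move/eqP/mxtrace_mul_trmx_eq0/eqP; rewrite (negbTE Y0).
Qed.

Lemma lie_bracket_scalar (R : comNzRingType) n (c : R) (Z : 'M[R]_n) :
  lie_bracket c%:M Z = 0.
Proof. by rewrite /lie_bracket mul_scalar_mx mul_mx_scalar subrr. Qed.

Lemma opT_eigenspace0_rank_ge2 (R : fieldType) n (X : 'M[R]_n) :
  (2 <= n)%N -> (2 <= \rank (eigenspace (opT_mx X) 0))%N.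
Proof.
case: n X => [|[|k]] X // _.
have one0 : (1%:M : 'M[R]_k.+2) != 0.
  by apply/eqP => /matrixP/(_ ord0 ord0)/eqP; rewrite !mxE oner_eq0.
have X1_0 : opT X 1%:M = 0 *: 1%:M.
  by apply: opT_lie_bracket0; rewrite lie_bracketC lie_bracket_scalar oppr0.
have [/is_scalar_mxP[c Xc] | Xnscalar] := boolP (is_scalar_mx X).
  rewrite Xc in X1_0 *.
  apply: (opT_eigenspace_rank_ge2 X1_0 _ one0 (Z := delta_mx ord0 ord_max)).
    exact/opT_lie_bracket0/lie_bracket_scalar.
  move=> d; apply/eqP => /matrixP/(_ ord0 ord_max)/eqP.
  by rewrite !mxE !eqxx mulr0 oner_eq0.
apply: (opT_eigenspace_rank_ge2 X1_0 _ one0 (Z := X)) => [|c].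
  by apply: opT_lie_bracket0; rewrite /lie_bracket subrr.
by rewrite scalemx1; apply: contra Xnscalar => /eqP ->; apply/is_scalar_mxP; exists c.
Qed.

Theorem mainTheorem6 (R : realType) (n : nat) (X : 'M[R]_n) (alpha : R) :
  (2 <= n)%N ->
  frob_norm2 X = 1 ->
  eigenvalue (opT_mx X) alpha ->
  (forall a : R, eigenvalue (opT_mx X) a -> a <= alpha) ->
  (2 <= \rank (eigenspace (opT_mx X) alpha))%N.
Proof.
move=> n_ge2 _ alphaE _.
have [->|alpha0] := eqVneq alpha 0; first exact: opT_eigenspace0_rank_ge2.
exact: opT_eigenspace_rank_ge2_neq0.
Qed.
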